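(* Let $G$ be a group and $K$ a finite index subgroup of $G$. Suppose $\tilde K\le K$ is a finite index subgroup, $\phi:\tilde K\to K$ is a homomorphism and $X$ is a transversal of $\tilde K$ in $K$ such that the action of $K$ on $X^*$ associated to $(K,\tilde K,\phi,X)$ is faithful. Let $\tilde\phi:\tilde K\to G$ be the composition of $\phi$ with the inclusion $K\hookrightarrow G$, and let $Y$ be a transversal of $\tilde K$ in $G$. Then the action of $G$ on the tree $Y^*$ associated to $(G,\tilde K,\tilde\phi,Y)$ is a faithful self-similar action.
   Context: Construction of the action associated to a quadruple $(\Gamma,L,\psi,Z)$: $\Gamma$ is a group, $L\le\Gamma$ of finite index, $\psi:L\to\Gamma$ a homomorphism (a virtual endomorphism), and $Z$ a set of representatives of the left cosets $zL$ of $L$ in $\Gamma$. For $g\in\Gamma$ and $z\in Z$ let $z'\in Z$ be the representative with $gzL=z'L$, so $z'^{-1}gz\in L$. The associated action of $\Gamma$ on the rooted tree with vertex set $Z^*$ (finite words over $Z$) is defined recursively on word length by $g(\varnothing)=\varnothing$ and $g(zw)=z'\,\big(\psi(z'^{-1}gz)\big)(w)$. It is an action by tree automorphisms in which every state of (the image of) each element is again (the image of) an element of $\Gamma$, i.e. it is self-similar; its kernel is the $\psi$-core of $L$, i.e. the largest subgroup $M\le L$ with $\psi(M)\le M$ that is normal in $\Gamma$, which equals $\bigcap_{m\ge1}\bigcap_{g\in\Gamma}g^{-1}\mathrm{Dom}(\psi^m)g$. *)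

From Stdlib Require Import List ClassicalEpsilon.
Import ListNotations.
Set Implicit Arguments.

Section GroupDefs.
Variables (T : Type) (mul : T -> T -> T) (one : T) (inv : T -> T).

Definition is_group : Prop :=
  (forall x y z, mul x (mul y z) = mul (mul x y) z) /\
  (forall x, mul one x = x) /\ (forall x, mul x one = x) /\
  (forall x, mul (inv x) x = one) /\ (forall x, mul x (inv x) = one).

Definition is_subgroup (H : T -> Prop) : Prop :=
  H one /\ (forall x y, H x -> H y -> H (mul x y)) /\ (forall x, H x -> H (inv x)).

Definition finite_index (A H : T -> Prop) : Prop :=
  exists l : list T, (forall x, In x l -> A x) /\
    (forall g, A g -> exists x, In x l /\ H (mul (inv x) g)).

Definition transversal (A H Z : T -> Prop) : Prop :=
  (forall z, Z z -> A z) /\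
  (forall g, A g -> exists z, Z z /\ H (mul (inv z) g) /\
     forall z', Z z' -> H (mul (inv z') g) -> z' = z).

(* psi : H -> B is a homomorphism (values outside H are irrelevant) *)
Definition hom_on (H B : T -> Prop) (psi : T -> T) : Prop :=
  (forall x, H x -> B (psi x)) /\
  (forall x y, H x -> H y -> psi (mul x y) = mul (psi x) (psi y)).

(* Words over Z: vertices of the rooted tree Z^* *)
Definition word (Z : T -> Prop) (w : list T) : Prop := Forall Z w.

Definition rep (L Z : T -> Prop) (g z : T) : T :=
  epsilon (inhabits one) (fun z' => Z z' /\ L (mul (inv z') (mul g z))).

Fixpoint act (L : T -> Prop) (psi : T -> T) (Z : T -> Prop) (g : T) (w : list T)
  : list T :=
  match w with
  | [] => []
  | z :: w' =>
      let z' := rep L Z g z in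
      z' :: act L psi Z (psi (mul (inv z') (mul g z))) w'
  end.

Definition faithful_on (Gamma L : T -> Prop) (psi : T -> T) (Z : T -> Prop) : Prop :=
  forall g, Gamma g -> (forall w, word Z w -> act L psi Z g w = w) -> g = one.

Definition self_similar_action (Gamma L : T -> Prop) (psi : T -> T) (Z : T -> Prop)
  : Prop :=
  (forall g w, Gamma g -> word Z w -> word Z (act L psi Z g w)) /\
  (forall w, word Z w -> act L psi Z one w = w) /\
  (forall g h w, Gamma g -> Gamma h -> word Z w ->
     act L psi Z (mul g h) w = act L psi Z g (act L psi Z h w)) /\
  (forall g v, Gamma g -> word Z v ->
     exists h, Gamma h /\
       forall w, word Z w ->
         act L psi Z g (v ++ w) = act L psi Z g v ++ act L psi Z h w).

End GroupDefs.

(** The kernel of the action of [G] on [Y^*] is its [phi]-core: a subgroup of [Kt] that is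
    normal in [G] and mapped into itself by [phi].  Such a subgroup is normalised by [K] and
    [phi]-invariant, and every [phi]-invariant subgroup of [Kt] normalised by the letters of
    [X] acts trivially on [X^*]; by faithfulness of the [K]-action it is trivial.
    Self-similarity holds for the action attached to any virtual endomorphism. *)

From Pilot Require Import Defs.
From Stdlib Require Import List ClassicalEpsilon.
Import ListNotations.
Set Implicit Arguments.

Section GroupAction.

Variables (T : Type) (mul : T -> T -> T) (one : T) (inv : T -> T).
Hypothesis HG : is_group mul one inv.

Lemma mulA x y z : mul x (mul y z) = mul (mul x y) z.
Proof. apply HG. Qed.

Lemma mul1g x : mul one x = x.
Proof. apply HG. Qed.

Lemma mulg1 x : mul x one = x.
Proof. apply HG. Qed.

Lemma mulVg x : mul (inv x) x = one.
Proof. apply HG. Qed.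

Lemma mulgV x : mul x (inv x) = one.
Proof. apply HG. Qed.

Lemma mulKg x y : mul (inv x) (mul x y) = y.
Proof. now rewrite mulA, mulVg, mul1g. Qed.

Lemma mulKVg x y : mul x (mul (inv x) y) = y.
Proof. now rewrite mulA, mulgV, mul1g. Qed.

Lemma invgK x : inv (inv x) = x.
Proof. now rewrite <- (mulg1 (inv (inv x))), <- (mulVg x), mulA, mulVg, mul1g. Qed.

Lemma hom_on1 (H B : T -> Prop) (psi : T -> T) :
  is_subgroup mul one inv H -> hom_on mul H B psi -> psi one = one.
Proof.
  intros [H1 _] [_ psiM].
  rewrite <- (mulKg (psi one) (psi one)) at 1.
  now rewrite <- psiM, mul1g, mulVg.
Qed.

Variables (Gamma L Z : T -> Prop) (psi : T -> T).
Hypothesis HGamma : is_subgroup mul one inv Gamma.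
Hypothesis HL : is_subgroup mul one inv L.
Hypothesis HLGamma : forall x, L x -> Gamma x.
Hypothesis Hpsi : hom_on mul L Gamma psi.
Hypothesis HZ : transversal mul inv Gamma L Z.

Local Notation rep := (rep mul one inv L Z).
Local Notation act := (act mul one inv L psi Z).

Lemma Gamma_mul x y : Gamma x -> Gamma y -> Gamma (mul x y).
Proof. apply HGamma. Qed.

Lemma Gamma_inv x : Gamma x -> Gamma (inv x).
Proof. apply HGamma. Qed.

Lemma Gamma_letter z : Z z -> Gamma z.
Proof. apply HZ. Qed.

Lemma rep_spec g z :
  Gamma (mul g z) -> Z (rep g z) /\ L (mul (inv (rep g z)) (mul g z)).
Proof.
  intros Hgz. unfold Defs.rep. apply epsilon_spec.
  destruct (proj2 HZ _ Hgz) as (z0 & Zz0 & Lz0 & _). eauto.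
Qed.

Lemma rep_unique g z z' :
  Gamma (mul g z) -> Z z' -> L (mul (inv z') (mul g z)) -> rep g z = z'.
Proof.
  intros Hgz Zz' Lz'.
  destruct (proj2 HZ _ Hgz) as (z0 & _ & _ & Huniq).
  destruct (rep_spec Hgz) as [Zr Lr].
  now rewrite (Huniq _ Zr Lr), (Huniq _ Zz' Lz').
Qed.

Lemma act_cons g z w :
  act g (z :: w) = rep g z :: act (psi (mul (inv (rep g z)) (mul g z))) w.
Proof. reflexivity. Qed.

Lemma Gamma_section g z :
  Gamma g -> Z z -> Gamma (psi (mul (inv (rep g z)) (mul g z))).
Proof.
  intros Gg Zz. apply Hpsi, rep_spec, Gamma_mul, Gamma_letter; assumption.
Qed.

Lemma act_word g w : Gamma g -> word Z w -> word Z (act g w).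
Proof.
  intros Gg Hw. revert g Gg.
  induction Hw as [|z w Zz Hw IH]; intros g Gg; constructor.
  - apply rep_spec, Gamma_mul, Gamma_letter; assumption.
  - apply IH, Gamma_section; assumption.
Qed.

Lemma act_one w : word Z w -> act one w = w.
Proof.
  induction 1 as [|z w Zz Hw IH]; [reflexivity|].
  assert (Gz : Gamma (mul one z)) by (rewrite mul1g; apply Gamma_letter, Zz).
  assert (rep_one : rep one z = z).
  { apply rep_unique; [assumption | assumption |].
    rewrite mul1g, mulVg. apply HL. }
  rewrite act_cons, rep_one, mul1g, mulVg, (hom_on1 HL Hpsi), IH.
  reflexivity.
Qed.

Lemma act_mul g h w :
  Gamma g -> Gamma h -> word Z w -> act (mul g h) w = act g (act h w).
Proof.
  intros Gg Gh Hw. revert g h Gg Gh.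
  induction Hw as [|z w Zz Hw IH]; intros g h Gg Gh; [reflexivity|].
  rewrite !act_cons.
  set (z1 := rep h z). set (z2 := rep g z1).
  destruct (rep_spec (z := z) (g := h)) as [Zz1 Lz1];
    [apply Gamma_mul, Gamma_letter; assumption |].
  destruct (rep_spec (z := z1) (g := g)) as [Zz2 Lz2];
    [apply Gamma_mul, Gamma_letter; assumption |].
  (* the section of [g h] at [z] is the product of the sections of [g] at [z1] and [h] at [z] *)
  assert (Hsplit : mul (inv z2) (mul (mul g h) z) =
                   mul (mul (inv z2) (mul g z1)) (mul (inv z1) (mul h z))).
  { now rewrite <- !mulA, mulKVg. }
  assert (rep_mul : rep (mul g h) z = z2).
  { apply rep_unique; [apply Gamma_mul, Gamma_letter; [apply Gamma_mul|]; assumption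
                     | assumption |].
    rewrite Hsplit. apply HL; assumption. }
  rewrite rep_mul, Hsplit, (proj2 Hpsi) by assumption.
  f_equal. apply IH; apply Hpsi; assumption.
Qed.

Lemma act_cat g v : Gamma g -> word Z v ->
  exists h, Gamma h /\ forall w, act g (v ++ w) = act g v ++ act h w.
Proof.
  intros Gg Hv. revert g Gg.
  induction Hv as [|z v Zz Hv IH]; intros g Gg.
  - now exists g.
  - destruct (IH _ (Gamma_section Gg Zz)) as (h & Gh & Hh).
    exists h. split; [assumption|].
    intros w. rewrite <- app_comm_cons, !act_cons, Hh. reflexivity.
Qed.

Theorem act_self_similar : self_similar_action mul one inv Gamma L psi Z.
Proof.
  split; [intros; now apply act_word |].
  split; [exact act_one |].
  split; [intros; now apply act_mul |].
  intros g v Gg Hv. destruct (act_cat Gg Hv) as (h & Gh & Hh). eauto.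
Qed.

Definition act_kernel (g : T) : Prop := forall w, word Z w -> act g w = w.

Lemma act_kernel_conj g h :
  Gamma g -> Gamma h -> act_kernel g -> act_kernel (mul h (mul g (inv h))).
Proof.
  intros Gg Gh Kg w Hw.
  assert (Gh' : Gamma (inv h)) by (apply Gamma_inv, Gh).
  rewrite act_mul, act_mul, Kg by auto using act_word, Gamma_mul.
  now rewrite <- act_mul, mulgV, act_one.
Qed.

Lemma act_kernel_section g y : Gamma g -> act_kernel g -> Z y ->
  L (mul (inv y) (mul g y)) /\ act_kernel (psi (mul (inv y) (mul g y))).
Proof.
  intros Gg Kg Zy.
  assert (Hy := Kg [y] (Forall_cons _ Zy (Forall_nil _))).
  rewrite act_cons in Hy. injection Hy as rep_y.
  split.
  - rewrite <- rep_y at 1. apply rep_spec, Gamma_mul, Gamma_letter; assumption.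
  - intros w Hw. assert (Hyw := Kg (y :: w) (Forall_cons _ Zy Hw)).
    rewrite act_cons, rep_y in Hyw. now injection Hyw.
Qed.

(* conjugating by a letter [y0] turns the section of the conjugate at [y0] back into [g] *)
Lemma act_kernel_psi_stable g : Gamma g -> act_kernel g -> L g /\ act_kernel (psi g).
Proof.
  intros Gg Kg.
  destruct (proj2 HZ one (proj1 HGamma)) as (y0 & Zy0 & _).
  assert (Gy0 := Gamma_letter Zy0).
  assert (Hconj : mul (inv y0) (mul (mul y0 (mul g (inv y0))) y0) = g).
  { now rewrite <- !mulA, mulKg, mulVg, mulg1. }
  rewrite <- Hconj. apply act_kernel_section; [| apply act_kernel_conj |]; auto.
  apply Gamma_mul, Gamma_mul, Gamma_inv; assumption.
Qed.

Lemma act_kernel_of_psi_stable (M : T -> Prop) :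
  (forall m, M m -> L m) ->
  (forall m, M m -> M (psi m)) ->
  (forall m z, M m -> Z z -> M (mul (inv z) (mul m z))) ->
  forall m, M m -> act_kernel m.
Proof.
  intros ML Mpsi Mconj m Mm w Hw. revert m Mm.
  induction Hw as [|z w Zz Hw IH]; intros m Mm; [reflexivity|].
  assert (rep_z : rep m z = z).
  { apply rep_unique; auto using Gamma_mul, Gamma_letter. }
  rewrite act_cons, rep_z, IH; auto.
Qed.

End GroupAction.

Theorem mainTheorem5
  (T : Type) (mul : T -> T -> T) (one : T) (inv : T -> T)
  (HG : is_group mul one inv)
  (K Kt X Y : T -> Prop) (phi : T -> T)
  (HK : is_subgroup mul one inv K)
  (HKfin : finite_index mul inv (fun _ => True) K)
  (HKt : is_subgroup mul one inv Kt)
  (HKtK : forall x, Kt x -> K x)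
  (HKtfin : finite_index mul inv K Kt)
  (Hphi : hom_on mul Kt K phi)
  (HX : transversal mul inv K Kt X)
  (Hfaith : faithful_on mul one inv K Kt phi X)
  (HY : transversal mul inv (fun _ => True) Kt Y) :
  faithful_on mul one inv (fun _ => True) Kt phi Y /\
  self_similar_action mul one inv (fun _ => True) Kt phi Y.
Proof.
  assert (HT : is_subgroup mul one inv (fun _ => True)) by easy.
  assert (Hphi' : hom_on mul Kt (fun _ => True) phi) by (split; [easy | apply Hphi]).
  split; [| now apply act_self_similar].
  intros g _ Kg.
  set (N := act_kernel mul one inv Kt Y phi).
  assert (NKt : forall m, N m -> Kt m /\ N (phi m)).
  { intros m Nm. now apply (act_kernel_psi_stable HG HT HKt Hphi' HY). }
  assert (Nconj : forall m z, N m -> X z -> N (mul (inv z) (mul m z))).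
  { intros m z Nm _. rewrite <- (invgK HG z) at 2.
    now apply (act_kernel_conj HG HT HKt Hphi' HY). }
  apply Hfaith; [exact (HKtK _ (proj1 (NKt g Kg))) |].
  exact (act_kernel_of_psi_stable phi HK HKtK HX N
           (fun m Nm => proj1 (NKt m Nm)) (fun m Nm => proj2 (NKt m Nm)) Nconj g Kg).
Qed.
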